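(* Let $(X,d)$ be an $F$-space with non-decreasing metric $d$ and let $\{A_n\}$ be an approximation scheme on $X$. Suppose there exist an infinite set $\mathbb{N}_0\subseteq\mathbb{N}$, a bounded subset $\{x_n\}_{n\in\mathbb{N}_0}$ of $X$ and $c>0$ such that $c\le E(x_n,A_n)$ for all $n\in\mathbb{N}_0$. Then $\{A_n\}$ satisfies Shapiro's theorem on $X$.
   Context: An $F$-space is a complete metric vector space with translation-invariant metric $d$; $d$ is non-decreasing if $d(\alpha x,0)\le d(x,0)$ for $0\le\alpha\le1$. A subset $A\subseteq X$ is bounded (in the topological vector space sense) if for every $r>0$ there exists $\lambda>0$ with $A\subseteq\lambda B(0,r)$, where $B(0,r)=\{y:d(y,0)\le r\}$. An approximation scheme on $X$ is a chain $A_0\subsetneq A_1\subsetneq\cdots\subsetneq X$ of subsets with: (A1) there is $K:\mathbb{N}\to\mathbb{N}$, $K(n)\ge n$, $A_n+A_n\subseteq A_{K(n)}$; (A2) $\lambda A_n\subseteq A_n$ for all scalars $\lambda$; (A3) $\bigcup_nA_n$ dense in $X$. $E(x,A)=\inf_{a\in A}d(x,a)$. $\{A_n\}$ satisfies Shapiro's theorem on $X$ if for every non-increasing sequence $\{\varepsilon_n\}$ of nonnegative reals tending to $0$ there exists $x\in X$ with $E(x,A_n)\neq\mathbf{O}(\varepsilon_n)$. *)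

From HB Require Import structures.
From mathcomp Require Import all_boot all_order all_algebra.
From mathcomp Require Import all_classical all_reals ereal.
Set Implicit Arguments. Unset Strict Implicit. Unset Printing Implicit Defensive.
Import Order.TTheory GRing.Theory Num.Theory.
Local Open Scope classical_set_scope.
Local Open Scope ring_scope.

Section FSpace.
Variables (R : realType) (X : lmodType R).

Definition is_metric (d : X -> X -> R) : Prop :=
  (forall x y, 0 <= d x y) /\ (forall x y, d x y = 0 <-> x = y) /\
  (forall x y, d x y = d y x) /\ (forall x y z, d x z <= d x y + d y z).

Definition translation_invariant (d : X -> X -> R) : Prop :=
  forall x y z, d (x + z) (y + z) = d x y.

Definition add_continuous (d : X -> X -> R) : Prop :=
  forall x y (e : R), 0 < e -> exists2 del : R, 0 < del &
    forall x' y', d x' x < del -> d y' y < del -> d (x' + y') (x + y) < e.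

Definition scale_continuous (d : X -> X -> R) : Prop :=
  forall (l : R) x (e : R), 0 < e -> exists2 del : R, 0 < del &
    forall (l' : R) x', `|l' - l| < del -> d x' x < del ->
      d (l' *: x') (l *: x) < e.

Definition d_cauchy (d : X -> X -> R) (u : nat -> X) : Prop :=
  forall e : R, 0 < e -> exists N, forall m n, (N <= m)%N -> (N <= n)%N ->
    d (u m) (u n) < e.

Definition d_converges (d : X -> X -> R) (u : nat -> X) (x : X) : Prop :=
  forall e : R, 0 < e -> exists N, forall n, (N <= n)%N -> d (u n) x < e.

Definition d_complete (d : X -> X -> R) : Prop :=
  forall u, d_cauchy d u -> exists x, d_converges d u x.

Definition F_space (d : X -> X -> R) : Prop :=
  [/\ is_metric d, translation_invariant d, add_continuous d,
      scale_continuous d & d_complete d].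

Definition nondecreasing_metric (d : X -> X -> R) : Prop :=
  forall (a : R) x, 0 <= a <= 1 -> d (a *: x) 0 <= d x 0.

(* boundedness in the topological vector space sense, for a family
   {x_n}_{n in N0} *)
Definition tvs_bounded_family (d : X -> X -> R) (N0 : set nat)
  (x : nat -> X) : Prop :=
  forall r : R, 0 < r -> exists2 lam : R, 0 < lam &
    forall n, N0 n -> exists y, d y 0 <= r /\ x n = lam *: y.

Definition proper_subset (A B : set X) : Prop := A `<=` B /\ A <> B.

Definition approximation_scheme (d : X -> X -> R) (A : nat -> set X) : Prop :=
  [/\ (forall n, proper_subset (A n) (A n.+1)),
      (exists K : nat -> nat, forall n, (n <= K n)%N /\
          forall a b, A n a -> A n b -> A (K n) (a + b)),
      (forall n (lam : R) a, A n a -> A n (lam *: a)) &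
      (forall x (e : R), 0 < e -> exists n a, A n a /\ d x a < e)].

(* E(x,A) = inf_{a in A} d(x,a), in the extended reals (inf of empty = +oo) *)
Definition Edist (d : X -> X -> R) (x : X) (A : set X) : \bar R :=
  ereal_inf [set (d x a)%:E | a in A].

Definition bigO_seq (d : X -> X -> R) (x : X) (A : nat -> set X)
  (eps : nat -> R) : Prop :=
  exists2 C : R, 0 < C & exists N, forall n, (N <= n)%N ->
    (Edist d x (A n) <= (C * eps n)%:E)%E.

Definition satisfies_Shapiro (d : X -> X -> R) (A : nat -> set X) : Prop :=
  forall eps : nat -> R,
    (forall n, 0 <= eps n) -> (forall n, eps n.+1 <= eps n) ->
    (forall e : R, 0 < e -> exists N, forall n, (N <= n)%N -> eps n < e) ->
    exists x : X, ~ bigO_seq d x A eps.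

End FSpace.

From HB Require Import structures.
From mathcomp Require Import all_boot all_order all_algebra.
From mathcomp Require Import all_classical all_reals ereal.
From mathcomp Require Import lra.
Set Implicit Arguments. Unset Strict Implicit. Unset Printing Implicit Defensive.
Import Order.TTheory GRing.Theory Num.Theory.
Local Open Scope classical_set_scope.
Local Open Scope ring_scope.

(* Scaling a bounded family of points that are c-far from the A_n down into a
   small ball around 0 (using that d is non-decreasing) gives, for every r > 0,
   points of norm <= r uniformly far from every A_n.  Translating such a point
   by an element close to a given s (density, and A_n - A_n in A_K(n)) yields
   points near every s that are uniformly far from A_n with n arbitrarily
   large.  Adding such perturbations with rapidly shrinking radii produces a
   Cauchy series whose sum x stays at distance >= delta_k / 2 from A_(n_k),
   while eps_(n_k) < delta_k / (4 (k+1)); hence E(x, A_n) is not O(eps_n). *)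

Lemma infinite_set_unbounded (N0 : set nat) :
  infinite_set N0 -> forall n, exists2 m, (n <= m)%N & N0 m.
Proof.
move=> N0oo n; apply: contrapT => N0_lt_n; apply: N0oo.
apply: (@sub_finite_set _ _ `I_n) => // m N0m /=.
by rewrite ltnNge; apply/negP => le_nm; apply: N0_lt_n; exists m.
Qed.

Lemma halving_mul_le (R : realFieldType) (r : nat -> R) :
  (forall k, 0 <= r k) -> (forall k, r k.+1 <= r k / 2) ->
  forall k, r k * k.+1%:R <= r 0.
Proof.
move=> r_ge0 r_half; elim=> [|k IHk]; first by rewrite mulr1.
have k1_ge1 : 1 <= k.+1%:R :> R by rewrite ler1n.
rewrite [k.+2%:R]mulrSr.
have := r_half k; have := r_ge0 k.+1; have := r_ge0 k; nra.
Qed.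

Lemma halving_small (R : realType) (r : nat -> R) :
  (forall k, 0 <= r k) -> (forall k, r k.+1 <= r k / 2) ->
  forall e, 0 < e -> exists N, r N < e.
Proof.
move=> r_ge0 r_half e e_gt0.
have := archi_boundP (divr_ge0 (r_ge0 0%N) (ltW e_gt0)).
set N := Num.Def.archi_bound _; rewrite ltr_pdivrMr // => r0_lt.
exists N; rewrite -(ltr_pM2r (ltr0Sn R N)).
apply: le_lt_trans (halving_mul_le r_ge0 r_half N) _.
apply: lt_le_trans r0_lt _; rewrite mulrC ler_wpM2l ?ler_nat ?ltW //.
Qed.

Lemma Edist_geP (R : realType) (X : lmodType R) (d : X -> X -> R)
    (x : X) (B : set X) (c : R) :
  (c%:E <= Edist d x B)%E <-> forall a, B a -> c <= d x a.
Proof.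
split=> [/ereal_infP c_lb a Ba|c_lb].
  by rewrite -lee_fin; apply: c_lb; exists a.
by apply/ereal_infP => _ [a Ba <-]; rewrite lee_fin; apply: c_lb.
Qed.

Lemma halving_radii (R : realFieldType) (delta : R -> R) :
  (forall r, 0 < r -> 0 < delta r) -> exists rad : nat -> R,
  [/\ forall k, 0 < rad k, forall k, rad k.+1 <= rad k / 2 &
       forall k, rad k.+1 <= delta (rad k)].
Proof.
move=> delta_gt0.
exists (fun k => iter k (fun t => Num.min (t / 2) (delta t)) 1).
split=> k /=; rewrite ?ge_min ?lexx ?orbT //.
by elim: k => [|k IHk] /=; rewrite ?ltr01 // lt_min divr_gt0 ?delta_gt0.
Qed.

Lemma not_bigO_seq (R : realType) (X : lmodType R) (d : X -> X -> R)
    (A : nat -> set X) (eps : nat -> R) (x : X) :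
  (forall n, 0 <= eps n) ->
  (forall k, exists2 n, (k <= n)%N &
     (k.+1%:R * eps n)%:E < Edist d x (A n))%E ->
  ~ bigO_seq d x A eps.
Proof.
move=> eps_ge0 far [C C_gt0 [N E_le]].
pose k := maxn N (Num.Def.archi_bound C).
have C_le : C <= k.+1%:R.
  apply: le_trans (ltW (archi_boundP (ltW C_gt0))) _.
  by rewrite ler_nat ltnW // ltnS leq_maxr.
have [n le_kn E_gt] := far k.
have := lt_le_trans E_gt (E_le n (leq_trans (leq_maxl _ _) le_kn)).
by rewrite lte_fin ltNge ler_wpM2r.
Qed.

Lemma nested_le (T : Type) (A : nat -> set T) :
  (forall n, A n `<=` A n.+1) -> forall n m, (n <= m)%N -> A n `<=` A m.
Proof.
move=> A_nested n; elim=> [|m IHm]; first by rewrite leqn0 => /eqP ->.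
rewrite leq_eqVlt => /orP[/eqP -> //|]; rewrite ltnS => /IHm A_sub a /A_sub.
exact: A_nested.
Qed.

Definition far_in_every_ball (R : realType) (X : lmodType R) (d : X -> X -> R)
    (A : nat -> set X) : Prop :=
  forall r, 0 < r -> exists2 del, 0 < del & forall s m, exists n s',
    [/\ (m <= n)%N, d s' s <= r & forall a, A n a -> del <= d s' a].

Definition far_near_zero (R : realType) (X : lmodType R) (d : X -> X -> R)
    (A : nat -> set X) : Prop :=
  forall r, 0 < r -> exists2 del, 0 < del &
    forall n, exists y, d y 0 <= r /\ forall a, A n a -> del <= d y a.

Section MetricFacts.
Variables (R : realType) (X : lmodType R) (d : X -> X -> R).
Hypothesis d_metric : is_metric d.

Let d_sym : forall x y, d x y = d y x.
Proof. by case: d_metric => _ [_ [d_sym _]]. Qed.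
Let d_tri : forall x y z, d x z <= d x y + d y z.
Proof. by case: d_metric => _ [_ [_ d_tri]]. Qed.
Let d_xx : forall x, d x x = 0.
Proof. by case: d_metric => _ [d_eq0 _] x; apply/d_eq0. Qed.

Section HalvingSteps.
Variables (s : nat -> X) (r : nat -> R).
Hypotheses (r_ge0 : forall k, 0 <= r k) (r_half : forall k, r k.+1 <= r k / 2).
Hypothesis step_le : forall k, d (s k.+1) (s k) <= r k.

Lemma dist_halving_steps k m : (k <= m)%N -> d (s m) (s k) <= 2 * (r k - r m).
Proof.
elim: m => [|m IHm].
  by rewrite leqn0 => /eqP ->; rewrite d_xx subrr mulr0.
rewrite leq_eqVlt => /orP[/eqP <-|]; first by rewrite d_xx subrr mulr0.
rewrite ltnS => /IHm le_km; apply: le_trans (d_tri _ (s m) _) _.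
have := step_le m; have := r_half m; have := r_ge0 m.+1; lra.
Qed.

Lemma halving_steps_limit :
  d_complete d -> exists x, forall k, d x (s k) <= 2 * r k.
Proof.
move=> d_cpl.
have s_cauchy : d_cauchy d s.
  move=> e e_gt0.
  have [N rN_lt] := halving_small r_ge0 r_half (divr_gt0 e_gt0 (ltr0Sn R 3)).
  exists N => m n le_Nm le_Nn; apply: le_lt_trans (d_tri _ (s N) _) _.
  rewrite (d_sym (s N)); have := dist_halving_steps le_Nm.
  have := dist_halving_steps le_Nn; have := r_ge0 m; have := r_ge0 n.
  move: rN_lt; rewrite ltr_pdivlMr //; lra.
have [x s_cvg] := d_cpl s s_cauchy; exists x => k.
apply/ler_addgt0Pr => e e_gt0; have [N dN_lt] := s_cvg e e_gt0.
apply: le_trans (d_tri _ (s (maxn N k)) _) _.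
have := dN_lt _ (leq_maxl N k); rewrite d_sym.
have := dist_halving_steps (leq_maxr N k); have := r_ge0 (maxn N k); lra.
Qed.

End HalvingSteps.

Lemma shapiro_of_far_in_every_ball (A : nat -> set X) :
  d_complete d -> far_in_every_ball d A -> satisfies_Shapiro d A.
Proof.
move=> d_cpl far eps eps_ge0 _ eps_lim.
have delta_ex r : exists del, 0 < r -> 0 < del /\ forall s m, exists n s',
    [/\ (m <= n)%N, d s' s <= r & forall a, A n a -> del <= d s' a].
  have [r_gt0|_] := ltrP 0 r; last by exists 0.
  by have [del del_gt0 far_r] := far r r_gt0; exists del.
have [delta delta_spec] := boolp.choice delta_ex.
have [|rad [rad_gt0 rad_half rad_delta]] :=
  @halving_radii _ (fun t => delta t / 8).
  by move=> t /delta_spec[del_gt0 _]; rewrite divr_gt0.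
have next_ex k s : exists p : nat * X,
    [/\ (k <= p.1)%N, k.+1%:R * eps p.1 < delta (rad k) / 4, d p.2 s <= rad k &
      forall a, A p.1 a -> delta (rad k) <= d p.2 a].
  have [del_gt0 far_k] := delta_spec _ (rad_gt0 k).
  have [N eps_lt] := eps_lim (delta (rad k) / 4 / k.+1%:R)
    (divr_gt0 (divr_gt0 del_gt0 (ltr0Sn _ _)) (ltr0Sn _ _)).
  have [n [s' [le_n near far_s']]] := far_k s (maxn k N).
  exists (n, s'); split => //=; first exact: leq_trans (leq_maxl _ _) le_n.
  by rewrite mulrC -ltr_pdivlMr ?ltr0Sn // eps_lt // (leq_trans (leq_maxr k N)).
have [next next_spec] := boolp.choice (fun ks : nat * X => next_ex ks.1 ks.2).
pose s k := iteri k (fun i t => (next (i, t)).2) 0.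
have [x x_near] : exists x, forall k, d x (s k) <= 2 * rad k.
  apply: (halving_steps_limit (r := rad)) => // k; first exact: ltW.
  by case: (next_spec (k, s k)).
exists x; apply: not_bigO_seq => // k; exists (next (k, s k)).1.
  by case: (next_spec (k, s k)).
have [_ eps_lt _ far_k] := next_spec (k, s k).
have [del_gt0 _] := delta_spec _ (rad_gt0 k).
apply: (@lt_le_trans _ _ (delta (rad k) / 2)%:E); first by rewrite lte_fin; lra.
apply/Edist_geP => a /far_k far_a.
(* The tail of the series after step k moves x by at most delta / 4. *)
have : d x (next (k, s k)).2 <= 2 * rad k.+1 := x_near k.+1.
have := d_tri (next (k, s k)).2 x a; rewrite (d_sym _ x).
have := rad_delta k; lra.
Qed.

End MetricFacts.

Section TranslationInvariant.
Variables (R : realType) (X : lmodType R) (d : X -> X -> R).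
Hypotheses (d_metric : is_metric d) (d_tinv : translation_invariant d).

Lemma dist_sub u v : d u v = d (u - v) 0.
Proof. by rewrite -(d_tinv (u - v) 0 v) subrK add0r. Qed.

Lemma dist_natmul_le z m : d (z *+ m) 0 <= m%:R * d z 0.
Proof.
have [_ [d_eq0 [_ d_tri]]] := d_metric.
elim: m => [|m IHm]; first by rewrite mulr0n mul0r (proj2 (d_eq0 _ _) erefl).
rewrite mulrS [m.+1%:R]mulrS mulrDl mul1r.
apply: le_trans (d_tri _ (z *+ m) _) _.
by rewrite (dist_sub (z + _)) addrK lerD.
Qed.

Lemma dist_scale_le (lam : R) (m : nat) z : nondecreasing_metric d ->
  0 < lam -> lam <= m%:R -> d (lam *: z) 0 <= m%:R * d z 0.
Proof.
move=> d_nondec lam_gt0 lam_le; have m_gt0 := lt_le_trans lam_gt0 lam_le.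
have -> : lam *: z = (lam / m%:R) *: (z *+ m).
  by rewrite -scaler_nat scalerA divfK ?gt_eqF.
apply: le_trans (d_nondec _ _ _) (dist_natmul_le _ _).
by rewrite divr_ge0 ?(ltW lam_gt0) ?(ltW m_gt0) //= ler_pdivrMr // mul1r.
Qed.

Variable A : nat -> set X.
Hypotheses (A_nested : forall n, A n `<=` A n.+1)
  (A_scale : forall n (lam : R) a, A n a -> A n (lam *: a)).

Lemma far_near_zero_of_bounded (N0 : set nat) (x : nat -> X) (c : R) :
  nondecreasing_metric d -> infinite_set N0 -> tvs_bounded_family d N0 x ->
  0 < c -> (forall n, N0 n -> (c%:E <= Edist d (x n) (A n))%E) ->
  far_near_zero d A.
Proof.
move=> d_nondec N0oo x_bdd c_gt0 x_far r r_gt0.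
have [lam lam_gt0 x_eq] := x_bdd r r_gt0.
have lam_lt := archi_boundP (ltW lam_gt0).
set m := Num.Def.archi_bound lam in lam_lt.
have m_gt0 : 0 < m%:R :> R := lt_trans lam_gt0 lam_lt.
exists (c / m%:R) => [|n]; first exact: divr_gt0.
have [n' le_nn' N0n'] := infinite_set_unbounded N0oo n.
have [y [y_le x_n'E]] := x_eq n' N0n'; exists y; split => // a Aa.
have /Edist_geP/(_ (lam *: a)) := x_far n' N0n'.
move=> /(_ (A_scale lam (nested_le A_nested le_nn' Aa))) c_le.
rewrite ler_pdivrMr // mulrC (dist_sub y); apply: le_trans c_le _.
by rewrite x_n'E dist_sub -scalerBr dist_scale_le // ltW.
Qed.

Lemma far_in_every_ball_of_near_zero (K : nat -> nat) :
  (forall n a b, A n a -> A n b -> A (K n) (a + b)) ->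
  (forall x e, 0 < e -> exists n a, A n a /\ d x a < e) ->
  far_near_zero d A -> far_in_every_ball d A.
Proof.
move=> A_add A_dense far r r_gt0; have [del del_gt0 far_r] := far r r_gt0.
exists (del / 2) => [|s m]; first exact: divr_gt0.
have [m0 [b [Ab d_sb]]] := A_dense s (del / 4) (divr_gt0 del_gt0 (ltr0Sn _ _)).
pose n := maxn m m0; have [y [y_le y_far]] := far_r (K n).
exists n, (s + y); split; first exact: leq_maxl.
  by rewrite dist_sub addrC addKr.
(* If a in A n were near s + y, then a - b in A (K n) would be near y. *)
move=> a Aa; have Anb := nested_le A_nested (leq_maxr m m0) Ab.
have := y_far _ (A_add _ _ _ Aa (A_scale (-1) Anb)); rewrite scaleN1r.
have [_ [_ [d_sym d_tri]]] := d_metric.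
have := d_tri y (a - s) (a - b).
have -> : d y (a - s) = d (s + y) a.
  by rewrite (dist_sub y) (dist_sub (s + y)) opprB addrCA addrA.
have -> : d (a - s) (a - b) = d s b.
  by rewrite (dist_sub (a - s)) opprB addrC addrA subrK -dist_sub d_sym.
lra.
Qed.

End TranslationInvariant.

Theorem mainTheorem4 (R : realType) (X : lmodType R) (d : X -> X -> R)
  (A : nat -> set X) :
  F_space d -> nondecreasing_metric d -> approximation_scheme d A ->
  (exists (N0 : set nat) (x : nat -> X) (c : R),
     infinite_set N0 /\ tvs_bounded_family d N0 x /\ 0 < c /\
     (forall n, N0 n -> (c%:E <= Edist d (x n) (A n))%E)) ->
  satisfies_Shapiro d A.
Proof.
move=> [d_metric d_tinv _ _ d_cpl] d_nondec [A_proper [K A_K] A_scale A_dense].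
move=> [N0 [x [c [N0oo [x_bdd [c_gt0 x_far]]]]]].
have A_nested n : A n `<=` A n.+1 by case: (A_proper n).
apply: shapiro_of_far_in_every_ball => //.
apply: (far_in_every_ball_of_near_zero d_metric d_tinv A_nested A_scale
  (K := K)).
- by move=> n; case: (A_K n).
- exact: A_dense.
- exact: far_near_zero_of_bounded x_far.
Qed.
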